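(* Let $\mathscr{P},\mathscr{Q}$ be finite posets and $\mathscr{R}$ a finite poset. (1) $\mathscr{R}\in SAv(\mathscr{P}\sqcup\mathscr{Q})$ if and only if for every partition $(R_1,R_2)$ of the ground set of $\mathscr{R}$ into two blocks, with $\mathscr{R}_1,\mathscr{R}_2$ the induced subposets on $R_1,R_2$, either $\mathscr{R}_1\in SAv(\mathscr{P})$ or $\mathscr{R}_2\in SAv(\mathscr{Q})$. (2) If $\mathscr{R}\in SAv(\mathscr{P}\oplus\mathscr{Q})$, then for every ordered partition $(R_1,R_2)$ of $\mathscr{R}$ into two blocks, either $\mathscr{R}_1\in SAv(\mathscr{P})$ or $\mathscr{R}_2\in SAv(\mathscr{Q})$. If $\mathscr{R}\notin SAv(\mathscr{P}\oplus\mathscr{Q})$, then there exists a weakly ordered partition $(R_1,R_2)$ of $\mathscr{R}$ into two blocks such that $\mathscr{R}_1\notin SAv(\mathscr{P})$ and $\mathscr{R}_2\notin SAv(\mathscr{Q})$.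
   Context: A poset $\mathscr{R}$ weakly contains $\mathscr{P}$ if there is an injective order-preserving map $\mathscr{P}\to\mathscr{R}$; $\mathscr{R}$ strongly avoids $\mathscr{P}$ otherwise, and $SAv(\mathscr{P})$ is the class of finite posets strongly avoiding $\mathscr{P}$. A partition into two blocks is an ordered pair $(R_1,R_2)$ of disjoint subsets whose union is the ground set. It is an ordered partition if $x\le y$ for all $x\in R_1$, $y\in R_2$, and a weakly ordered partition if $x\not\ge y$ for all $x\in R_1$, $y\in R_2$. The disjoint union $\mathscr{P}\sqcup\mathscr{Q}$ has as ground set the disjoint union of the ground sets, with $x\le y$ iff $x\le y$ in $\mathscr{P}$ or in $\mathscr{Q}$. The linear sum $\mathscr{P}\oplus\mathscr{Q}$ has the same ground set, with $x\le y$ iff $x\le y$ in $\mathscr{P}$, or $x\le y$ in $\mathscr{Q}$, or $x\in\mathscr{P}$ and $y\in\mathscr{Q}$. *)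

From mathcomp Require Import all_boot.
Set Implicit Arguments. Unset Strict Implicit. Unset Printing Implicit Defensive.

Record finPoset := FinPoset {
  pcar :> finType;
  ple : rel pcar;
  ple_refl : reflexive ple;
  ple_anti : antisymmetric ple;
  ple_trans : transitive ple }.

Definition weakly_contains (R P : finPoset) : Prop :=
  exists f : pcar P -> pcar R,
    injective f /\ forall x y : pcar P, ple x y -> ple (f x) (f y).

(* R strongly avoids P, i.e. R \in SAv(P). *)
Definition SAv (P R : finPoset) : Prop := ~ weakly_contains R P.

Section Sub.
Variables (R : finPoset) (A : {set pcar R}).
Definition sub_car : finType := {x : pcar R | x \in A}.
Definition sub_le : rel sub_car := fun x y => ple (val x) (val y).
Lemma sub_refl : reflexive sub_le.
Proof. by move=> x; apply: ple_refl. Qed.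
Lemma sub_anti : antisymmetric sub_le.
Proof. by move=> x y H; apply: val_inj; apply: ple_anti. Qed.
Lemma sub_trans : transitive sub_le.
Proof. by move=> y x z; apply: ple_trans. Qed.
Definition induced : finPoset := FinPoset sub_refl sub_anti sub_trans.
End Sub.

Section Sums.
Variables P Q : finPoset.
Definition sum_car : finType := (pcar P + pcar Q)%type.

Definition dunion_le : rel sum_car := fun a b =>
  match a, b with
  | inl x, inl y => ple x y
  | inr x, inr y => ple x y
  | _, _ => false
  end.
Lemma dunion_refl : reflexive dunion_le.
Proof. by case=> x /=; apply: ple_refl. Qed.
Lemma dunion_anti : antisymmetric dunion_le.
Proof.
by case=> x [] y //= H; congr (_ _); apply: ple_anti.
Qed.
Lemma dunion_trans : transitive dunion_le.
Proof. by case=> y [] x [] z //=; apply: ple_trans. Qed.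
Definition dunion : finPoset := FinPoset dunion_refl dunion_anti dunion_trans.

Definition lsum_le : rel sum_car := fun a b =>
  match a, b with
  | inl x, inl y => ple x y
  | inr x, inr y => ple x y
  | inl _, inr _ => true
  | inr _, inl _ => false
  end.
Lemma lsum_refl : reflexive lsum_le.
Proof. by case=> x /=; apply: ple_refl. Qed.
Lemma lsum_anti : antisymmetric lsum_le.
Proof.
by case=> x [] y //= /andP[] //= H1 H2; congr (_ _); apply: ple_anti; rewrite H1 H2.
Qed.
Lemma lsum_trans : transitive lsum_le.
Proof. by case=> y [] x [] z //=; apply: ple_trans. Qed.
Definition lsum : finPoset := FinPoset lsum_refl lsum_anti lsum_trans.
End Sums.

Definition is_partition2 (R : finPoset) (R1 R2 : {set pcar R}) : Prop :=
  [disjoint R1 & R2] /\ R1 :|: R2 = [set: pcar R].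

Definition ordered_partition (R : finPoset) (R1 R2 : {set pcar R}) : Prop :=
  is_partition2 R1 R2 /\ forall x y, x \in R1 -> y \in R2 -> ple x y.

Definition weakly_ordered_partition (R : finPoset) (R1 R2 : {set pcar R}) : Prop :=
  is_partition2 R1 R2 /\ forall x y, x \in R1 -> y \in R2 -> ~~ ple y x.

From mathcomp Require Import all_boot.
From Stdlib Require Import Classical.

Set Implicit Arguments. Unset Strict Implicit.

(* An embedding of P (+) Q or P |_| Q into R splits R into the blocks receiving P and
   Q; for the disjoint union the image of P and its complement will do, for the linear
   sum one takes the up-closure of the image of Q, which avoids the image of P by
   antisymmetry and is an up-set, hence the partition is weakly ordered. Conversely,
   embeddings of P and Q into the two blocks of a partition glue to an injective map,
   monotone for the disjoint union, and for the linear sum when the partition is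
   ordered. *)

Lemma partition2_setC (R : finPoset) (A : {set pcar R}) : is_partition2 A (~: A).
Proof. by split; [rewrite -setI_eq0 setICr | rewrite setUCr]. Qed.

Lemma weakly_contains_induced (P R : finPoset) (A : {set pcar R}) (k : pcar P -> pcar R) :
  injective k -> (forall x y, ple x y -> ple (k x) (k y)) -> (forall x, k x \in A) ->
  weakly_contains (induced A) P.
Proof.
move=> k_inj k_mono kA; exists (fun x => exist _ (k x) (kA x)); split.
- by move=> x y /(congr1 val); apply: k_inj.
- exact: k_mono.
Qed.

Section Gluing.
Variables (P Q R : finPoset) (R1 R2 : {set pcar R}).
Variables (f : pcar P -> pcar (induced R1)) (g : pcar Q -> pcar (induced R2)).

Definition glue (s : sum_car P Q) : pcar R :=
  match s with inl x => val (f x) | inr y => val (g y) end.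

Lemma glue_inj : [disjoint R1 & R2] -> injective f -> injective g -> injective glue.
Proof.
move=> R12 f_inj g_inj [x|x] [y|y] /= E.
- by rewrite (f_inj _ _ (val_inj E)).
- by have /= := svalP (g y); rewrite -E (disjointFr R12 (svalP (f x))).
- by have /= := svalP (f y); rewrite -E (disjointFl R12 (svalP (g x))).
- by rewrite (g_inj _ _ (val_inj E)).
Qed.

End Gluing.

Lemma dunion_weakly_contains (P Q R : finPoset) (R1 R2 : {set pcar R}) :
  [disjoint R1 & R2] ->
  weakly_contains (induced R1) P -> weakly_contains (induced R2) Q ->
  weakly_contains R (dunion P Q).
Proof.
move=> R12 [f [f_inj f_mono]] [g [g_inj g_mono]].
exists (glue f g); split; first exact: glue_inj.
by move=> [x|x] [y|y] //= le_xy; [apply: f_mono | apply: g_mono].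
Qed.

Lemma lsum_weakly_contains (P Q R : finPoset) (R1 R2 : {set pcar R}) :
  ordered_partition R1 R2 ->
  weakly_contains (induced R1) P -> weakly_contains (induced R2) Q ->
  weakly_contains R (lsum P Q).
Proof.
move=> [[R12 _] R1_le_R2] [f [f_inj f_mono]] [g [g_inj g_mono]].
exists (glue f g); split; first exact: glue_inj.
move=> [x|x] [y|y] //= le_xy; [apply: f_mono | | apply: g_mono] => //.
exact: R1_le_R2 (valP (f x)) (valP (g y)).
Qed.

Lemma dunion_weakly_contains_split (P Q R : finPoset) :
  weakly_contains R (dunion P Q) ->
  exists R1 R2 : {set pcar R}, is_partition2 R1 R2 /\
    weakly_contains (induced R1) P /\ weakly_contains (induced R2) Q.
Proof.
move=> [h [h_inj h_mono]].
pose R1 := [set h (inl x) | x : pcar P].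
exists R1, (~: R1); split; first exact: partition2_setC.
split.
- apply: (weakly_contains_induced (k := h \o inl)) => [x y /h_inj [] //|x y|x].
  + exact: (h_mono (inl x) (inl y)).
  + exact: imset_f.
- apply: (weakly_contains_induced (k := h \o inr)) => [x y /h_inj [] //|x y|y].
  + exact: (h_mono (inr x) (inr y)).
  + by rewrite inE; apply/imsetP => -[x _ /h_inj].
Qed.

Lemma lsum_weakly_contains_split (P Q R : finPoset) :
  weakly_contains R (lsum P Q) ->
  exists R1 R2 : {set pcar R}, weakly_ordered_partition R1 R2 /\
    weakly_contains (induced R1) P /\ weakly_contains (induced R2) Q.
Proof.
move=> [h [h_inj h_mono]].
pose R2 := [set z | [exists y, ple (h (inr y)) z]].
exists (~: R2), R2; split; [split|split].
- by rewrite /is_partition2 setUC disjoint_sym; apply: partition2_setC.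
- move=> x z; rewrite !inE => /existsPn x_notin /existsP[y le_yz].
  by apply/negP => le_zx; case/negP: (x_notin y); apply: ple_trans le_zx.
- apply: (weakly_contains_induced (k := h \o inl)) => [x y /h_inj [] //|x y|x].
  + exact: (h_mono (inl x) (inl y)).
  + rewrite !inE; apply/existsP => -[y le_yx].
    have le_xy : ple (h (inl x)) (h (inr y)) by apply: (h_mono (inl x) (inr y)).
    by have /h_inj := ple_anti (introT andP (conj le_yx le_xy)).
- apply: (weakly_contains_induced (k := h \o inr)) => [x y /h_inj [] //|x y|y].
  + exact: (h_mono (inr x) (inr y)).
  + by rewrite inE; apply/existsP; exists y; apply: ple_refl.
Qed.

Theorem mainTheorem15 (P Q R : finPoset) :
  (SAv (dunion P Q) R <->
     (forall R1 R2 : {set pcar R}, is_partition2 R1 R2 ->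
        SAv P (induced R1) \/ SAv Q (induced R2)))
  /\
  (SAv (lsum P Q) R ->
     forall R1 R2 : {set pcar R}, ordered_partition R1 R2 ->
        SAv P (induced R1) \/ SAv Q (induced R2))
  /\
  (~ SAv (lsum P Q) R ->
     exists R1 R2 : {set pcar R}, weakly_ordered_partition R1 R2 /\
        ~ SAv P (induced R1) /\ ~ SAv Q (induced R2)).
Proof.
split; [split|split].
- move=> avoids R1 R2 [R12 _].
  apply: NNPP => /not_or_and[/NNPP cP /NNPP cQ].
  exact: avoids (dunion_weakly_contains R12 cP cQ).
- move=> split_avoids /dunion_weakly_contains_split[R1 [R2 [part [cP cQ]]]].
  by case: (split_avoids R1 R2 part).
- move=> avoids R1 R2 ord.
  apply: NNPP => /not_or_and[/NNPP cP /NNPP cQ].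
  exact: avoids (lsum_weakly_contains ord cP cQ).
- move=> /NNPP /lsum_weakly_contains_split[R1 [R2 [wpart [cP cQ]]]].
  by exists R1, R2; split; last split=> // avoids.
Qed.
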